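(* Let $M$ be a system execution satisfying the Lazy Set axioms A0, A1, A2. For every event $x$ with $\mathrm{Op}^1(x)$ there is no event $y$ with $\mathrm{Op}^0(y)$ such that $\mathrm{val}(y)=\mathrm{val}(x)$ and $\gamma(x)<y<x$.
   Context: A system execution $M$ consists of: a set of events, partitioned into low-level events (actions) and high-level events; unary predicates $\mathrm{Add},\mathrm{Rem},\mathrm{Cnt}$ on events; a partial order $<$ on events in which every event has finitely many predecessors (and Lamport's finiteness property: for every event $x$ there is a finite set $E$ with $x<y$ for all events $y\notin E$); functions $\mathrm{Begin},\mathrm{End}$ from events to actions with $\mathrm{Begin}(e)=\mathrm{End}(e)=e$ for actions $e$; functions $\chi$ (events $\to\{0,1,f\}$), $\mathrm{val}$ (events $\to\mathbb N$), $\gamma$ (events $\to$ events). For events $X,Y$, $X<Y$ iff $\mathrm{End}(X)<\mathrm{Begin}(Y)$. Notation: $\mathrm{Add}^p(a)$ abbreviates $\mathrm{Add}(a)\wedge\chi(a)=p$, similarly $\mathrm{Rem}^p,\mathrm{Cnt}^p$; $\mathrm{Op}^p(a)$ abbreviates $(\mathrm{Add}(a)\vee\mathrm{Rem}(a)\vee\mathrm{Cnt}(a))\wedge\chi(a)=p$ for $p\in\{0,1\}$. A0: $\mathrm{Add},\mathrm{Rem},\mathrm{Cnt}$ pairwise disjoint; $\mathrm{Add},\mathrm{Rem}$ events are actions, $\mathrm{Cnt}$ events are high-level; $\mathrm{Begin}(X),\mathrm{End}(X)$ are actions; for $\mathrm{Cnt}$ events $E$, $\mathrm{Begin}(E)<\mathrm{End}(E)$;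 $<$ restricted to actions is linear. A1: for every $A$ with $\mathrm{Op}^1(A)$: $\mathrm{Add}^0(\gamma(A))$, $\mathrm{val}(\gamma(A))=\mathrm{val}(A)$, $\gamma(A)<\mathrm{End}(A)$, and no $R$ has $\mathrm{Rem}^1(R)$, $\gamma(R)=\gamma(A)$, $\gamma(A)<R<A$. A2: if $\mathrm{Op}^0(B)$, $\mathrm{Add}^0(A)$, $A<B$, $\mathrm{val}(A)=\mathrm{val}(B)$, then some $R$ has $\mathrm{Rem}^1(R)$, $A=\gamma(R)$, $R<\mathrm{End}(B)$. *)

From Stdlib Require Import List.

Inductive chi_val : Type := chi0 | chi1 | chif.

(* A system execution M. Low-level events (actions) are those satisfying
   [action]; all other events are high-level. *)
Record system_execution : Type := {
  event : Type;
  action : event -> Prop;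
  Add : event -> Prop;
  Rem : event -> Prop;
  Cnt : event -> Prop;
  lt : event -> event -> Prop;
  Begin : event -> event;
  End : event -> event;
  chi : event -> chi_val;
  val : event -> nat;
  gamma : event -> event
}.

Definition is_system_execution (M : system_execution) : Prop :=
  (forall x : event M, ~ lt M x x) /\
  (forall x y z : event M, lt M x y -> lt M y z -> lt M x z) /\
  (forall x : event M, exists l : list (event M),
      forall y, lt M y x -> In y l) /\
  (forall x : event M, exists l : list (event M),
      forall y, ~ In y l -> lt M x y) /\
  (forall e : event M, action M e -> Begin M e = e /\ End M e = e) /\
  (forall X Y : event M, lt M X Y <-> lt M (End M X) (Begin M Y)).

Definition AddP (M : system_execution) (p : chi_val) (a : event M) : Prop :=
  Add M a /\ chi M a = p.
Definition RemP (M : system_execution) (p : chi_val) (a : event M) : Prop :=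
  Rem M a /\ chi M a = p.
Definition CntP (M : system_execution) (p : chi_val) (a : event M) : Prop :=
  Cnt M a /\ chi M a = p.
Definition OpP (M : system_execution) (p : chi_val) (a : event M) : Prop :=
  (Add M a \/ Rem M a \/ Cnt M a) /\ chi M a = p.

Definition A0 (M : system_execution) : Prop :=
  (forall a : event M, ~ (Add M a /\ Rem M a)) /\
  (forall a : event M, ~ (Add M a /\ Cnt M a)) /\
  (forall a : event M, ~ (Rem M a /\ Cnt M a)) /\
  (forall a : event M, Add M a -> action M a) /\
  (forall a : event M, Rem M a -> action M a) /\
  (forall a : event M, Cnt M a -> ~ action M a) /\
  (forall X : event M, action M (Begin M X) /\ action M (End M X)) /\
  (forall E : event M, Cnt M E -> lt M (Begin M E) (End M E)) /\
  (forall a b : event M, action M a -> action M b ->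
      lt M a b \/ a = b \/ lt M b a).

Definition A1 (M : system_execution) : Prop :=
  forall A : event M, OpP M chi1 A ->
    AddP M chi0 (gamma M A) /\
    val M (gamma M A) = val M A /\
    lt M (gamma M A) (End M A) /\
    ~ (exists R : event M, RemP M chi1 R /\ gamma M R = gamma M A /\
         lt M (gamma M A) R /\ lt M R A).

Definition A2 (M : system_execution) : Prop :=
  forall A B : event M, OpP M chi0 B -> AddP M chi0 A -> lt M A B ->
    val M A = val M B ->
    exists R : event M, RemP M chi1 R /\ A = gamma M R /\ lt M R (End M B).

(* Apply A2 to the add gamma(x) and the operation y: it yields a successful
   remove R of gamma(x) with R < End(y).  R is an action, so A1 for R gives
   gamma(x) = gamma(R) < End(R) = R, while R < End(y) < Begin(x) gives R < x.
   Thus R removes gamma(x) strictly between gamma(x) and x, which A1 for x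
   forbids. *)
From Stdlib Require Import List.

Section SystemExecution.

Variable M : system_execution.
Hypothesis HM : is_system_execution M.

Lemma lt_trans_event (x y z : event M) : lt M x y -> lt M y z -> lt M x z.
Proof. destruct HM as [_ [Htr _]]; apply Htr. Qed.

Lemma End_action (e : event M) : action M e -> End M e = e.
Proof. destruct HM as [_ [_ [_ [_ [HBE _]]]]]; intro He; apply (HBE e He). Qed.

Lemma lt_End_Begin (X Y : event M) : lt M X Y <-> lt M (End M X) (Begin M Y).
Proof. destruct HM as [_ [_ [_ [_ [_ Hlt]]]]]; apply Hlt. Qed.

Lemma action_lt_of_lt_End (a y x : event M) :
  action M a -> lt M a (End M y) -> lt M y x -> lt M a x.
Proof.
  intros Ha Hay Hyx.
  apply lt_End_Begin; rewrite (End_action a Ha).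
  apply lt_trans_event with (End M y); [exact Hay |].
  apply (lt_End_Begin y x); exact Hyx.
Qed.

Hypothesis HA0 : A0 M.
Hypothesis HA1 : A1 M.

Lemma Rem_action (R : event M) : Rem M R -> action M R.
Proof. destruct HA0 as [_ [_ [_ [_ [HRa _]]]]]; apply HRa. Qed.

Lemma gamma_lt_Rem1 (R : event M) : RemP M chi1 R -> lt M (gamma M R) R.
Proof.
  intros [HRem Hchi].
  assert (HOp : OpP M chi1 R) by (split; [right; left |]; assumption).
  destruct (HA1 R HOp) as [_ [_ [Hlt _]]].
  rewrite (End_action R (Rem_action R HRem)) in Hlt; exact Hlt.
Qed.

End SystemExecution.

Theorem lemma3p4 (M : system_execution) :
  is_system_execution M -> A0 M -> A1 M -> A2 M ->
  forall x : event M, OpP M chi1 x ->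
    ~ (exists y : event M, OpP M chi0 y /\ val M y = val M x /\
         lt M (gamma M x) y /\ lt M y x).
Proof.
  intros HM HA0 HA1 HA2 x Hx [y [Hy [Hval_y [Hgy Hyx]]]].
  destruct (HA1 x Hx) as [Hadd [Hval_g [_ Hno_remove]]].
  destruct (HA2 (gamma M x) y Hy Hadd Hgy (eq_trans Hval_g (eq_sym Hval_y)))
    as [R [HR [HgR HR_y]]].
  apply Hno_remove; exists R; split; [exact HR |]; split; [symmetry; exact HgR |].
  split.
  - rewrite HgR; exact (gamma_lt_Rem1 M HM HA0 HA1 R HR).
  - exact (action_lt_of_lt_End M HM R y x (Rem_action M HA0 R (proj1 HR)) HR_y Hyx).
Qed.
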